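(* Let $A=(A,\oplus,\odot)$ be a skew brace, $B$ a characteristic subgroup of $A_{\oplus}$, and $W$ a set of group words. For $x\in A$ denote by $\overline{x}$ the image of $x$ under the natural homomorphism $A_{\oplus}\to A_{\oplus}/B$. If $W(\mathrm{Aut}(A_{\oplus}/B))=1$, then for all $a,b\in W(A_{\odot})$ the equalities $\overline{a\odot b}=\overline{a\oplus b}$ and $\overline{a^{-1}}=\overline{\ominus a}$ hold.
   Context: A skew brace is a set $A$ with two binary operations $\oplus,\odot$ such that $A_{\oplus}=(A,\oplus)$ and $A_{\odot}=(A,\odot)$ are groups and $a\odot(b\oplus c)=(a\odot b)\ominus a\oplus(a\odot c)$ for all $a,b,c\in A$. Here $\ominus a$ is the inverse of $a$ in $A_{\oplus}$ and $a^{-1}$ is the inverse of $a$ in $A_{\odot}$. A group word is an element $w(x_1,\dots,x_n)$ of a free group on $x_1,\dots,x_n$; for a group $G$, $w(G)$ is the subgroup generated by all values $w(g_1,\dots,g_n)$, $g_i\in G$, and for a set $W$ of group words $W(G)$ is the subgroup generated by all $w(G)$, $w\in W$ (the verbal subgroup). *)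

Record is_group (T : Type) (op : T -> T -> T) (iv : T -> T) (e : T) : Prop := {
  grp_assoc : forall x y z, op x (op y z) = op (op x y) z;
  grp_idl : forall x, op e x = x;
  grp_idr : forall x, op x e = x;
  grp_invl : forall x, op (iv x) x = e;
  grp_invr : forall x, op x (iv x) = e
}.

Record group := Group {
  gcar :> Type;
  gmul : gcar -> gcar -> gcar;
  ginv : gcar -> gcar;
  gone : gcar;
  g_axioms : @is_group gcar gmul ginv gone
}.

Record skew_brace := SkewBrace {
  sb_car :> Type;
  sb_add : sb_car -> sb_car -> sb_car;
  sb_neg : sb_car -> sb_car;
  sb_zero : sb_car;
  sb_mul : sb_car -> sb_car -> sb_car;
  sb_inv : sb_car -> sb_car;
  sb_one : sb_car;
  sb_add_group : @is_group sb_car sb_add sb_neg sb_zero;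
  sb_mul_group : @is_group sb_car sb_mul sb_inv sb_one;
  sb_compat : forall a b c,
    sb_mul a (sb_add b c) = sb_add (sb_add (sb_mul a b) (sb_neg a)) (sb_mul a c)
}.

(** Group words: terms over variables x_0, x_1, ... (a word involves only
    finitely many variables); evaluation respects free-group equality. *)
Inductive word : Type :=
| WVar : nat -> word
| WOne : word
| WMul : word -> word -> word
| WInv : word -> word.

Fixpoint weval {T : Type} (op : T -> T -> T) (iv : T -> T) (e : T)
    (g : nat -> T) (w : word) : T :=
  match w with
  | WVar n => g n
  | WOne => e
  | WMul u v => op (weval op iv e g u) (weval op iv e g v)
  | WInv u => iv (weval op iv e g u)
  end.

(** Membership in the verbal subgroup W(G): the subgroup generated by all
    values w(g_1, g_2, ...), w ∈ W, with all g_i in the group G (the group G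
    is given as the elements of T satisfying D, with operations op, iv, e). *)
Inductive in_verbal {T : Type} (op : T -> T -> T) (iv : T -> T) (e : T)
    (D : T -> Prop) (W : word -> Prop) : T -> Prop :=
| iv_value : forall w g, W w -> (forall n, D (g n)) ->
    in_verbal op iv e D W (weval op iv e g w)
| iv_one : in_verbal op iv e D W e
| iv_mul : forall x y, in_verbal op iv e D W x -> in_verbal op iv e D W y ->
    in_verbal op iv e D W (op x y)
| iv_inv : forall x, in_verbal op iv e D W x -> in_verbal op iv e D W (iv x).

Definition is_hom {T U : Type} (opT : T -> T -> T) (opU : U -> U -> U)
    (f : T -> U) : Prop :=
  forall x y, f (opT x y) = opU (f x) (f y).

Definition is_aut_pair {T : Type} (op : T -> T -> T) (p : (T -> T) * (T -> T))
    : Prop :=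
  is_hom op op (fst p) /\ (forall x, snd p (fst p x) = x)
                       /\ (forall x, fst p (snd p x) = x).

(** Aut(Q), with each automorphism f represented by the pair (f, f^{-1});
    product is composition, inverse swaps the pair. *)
Definition aut_mul {T : Type} (p q : (T -> T) * (T -> T)) : (T -> T) * (T -> T) :=
  (fun x => fst p (fst q x), fun x => snd q (snd p x)).
Definition aut_inv {T : Type} (p : (T -> T) * (T -> T)) : (T -> T) * (T -> T) :=
  (snd p, fst p).
Definition aut_one {T : Type} : (T -> T) * (T -> T) := (fun x => x, fun x => x).

Definition verbal_aut_trivial (Q : group) (W : word -> Prop) : Prop :=
  forall p, in_verbal aut_mul aut_inv aut_one (is_aut_pair (@gmul Q)) W p ->
    forall x, fst p x = x.

Definition is_subgroup {T : Type} (op : T -> T -> T) (iv : T -> T) (e : T)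
    (B : T -> Prop) : Prop :=
  B e /\ (forall x y, B x -> B y -> B (op x y)) /\ (forall x, B x -> B (iv x)).

Definition characteristic_add_subgroup (A : skew_brace) (B : A -> Prop) : Prop :=
  is_subgroup (@sb_add A) (@sb_neg A) (@sb_zero A) B /\
  forall p : (A -> A) * (A -> A), is_aut_pair (@sb_add A) p ->
    forall x, B x -> B (fst p x).

(** pi : A_⊕ -> Q is (a presentation of) the natural homomorphism
    A_⊕ -> A_⊕ / B: a surjective homomorphism with kernel exactly B. *)
Definition natural_quotient (A : skew_brace) (B : A -> Prop) (Q : group)
    (pi : A -> Q) : Prop :=
  is_hom (@sb_add A) (@gmul Q) pi /\
  (forall q : Q, exists x, pi x = q) /\
  (forall x, pi x = gone Q <-> B x).

(** The map a ↦ λ_a, λ_a(x) = ⊖a ⊕ (a ⊙ x), is a homomorphism from A_⊙ to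
    Aut(A_⊕).  Since B is characteristic, each λ_a descends to an automorphism
    of A_⊕/B, which gives a homomorphism A_⊙ → Aut(A_⊕/B); homomorphisms map
    verbal subgroups into verbal subgroups, so for a ∈ W(A_⊙) the induced
    automorphism lies in W(Aut(A_⊕/B)) = 1, i.e. λ_a(x) ≡ x mod B.  Then
    a ⊙ b = a ⊕ λ_a(b) ≡ a ⊕ b, and 0 = a ⊙ a⁻¹ ≡ a ⊕ a⁻¹ gives a⁻¹ ≡ ⊖a. *)

From Stdlib Require Import ClassicalEpsilon FunctionalExtensionality.

#[local] Arguments grp_assoc {T op iv e}.
#[local] Arguments grp_idl {T op iv e}.
#[local] Arguments grp_idr {T op iv e}.
#[local] Arguments grp_invl {T op iv e}.
#[local] Arguments grp_invr {T op iv e}.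

Section GroupTheory.

Context {T : Type} {op : T -> T -> T} {iv : T -> T} {e : T}.
Hypothesis G : is_group T op iv e.

Lemma mul_left_cancel x y z : op x y = op x z -> y = z.
Proof.
  intro Hxyz.
  rewrite <- (grp_idl G y), <- (grp_idl G z), <- (grp_invl G x),
    <- !(grp_assoc G), Hxyz.
  reflexivity.
Qed.

Lemma inv_unique x y : op x y = e -> y = iv x.
Proof.
  intro Hxy. apply (mul_left_cancel x). rewrite Hxy, (grp_invr G). reflexivity.
Qed.

Lemma invK x : iv (iv x) = x.
Proof. symmetry. apply inv_unique, (grp_invl G). Qed.

Lemma inv_one : iv e = e.
Proof. symmetry. apply inv_unique, (grp_idl G). Qed.

Lemma invM x y : iv (op x y) = op (iv y) (iv x).
Proof.
  symmetry. apply inv_unique.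
  rewrite <- (grp_assoc G), (grp_assoc G y), (grp_invr G), (grp_idl G), (grp_invr G).
  reflexivity.
Qed.

Lemma eq_of_mul_inv_l x y : op (iv x) y = e -> x = y.
Proof. intro Hxy. apply inv_unique in Hxy. rewrite invK in Hxy. symmetry. exact Hxy. Qed.

End GroupTheory.

Section Homomorphisms.

Context {T U : Type} {opT : T -> T -> T} {ivT : T -> T} {eT : T}
  {opU : U -> U -> U} {ivU : U -> U} {eU : U}.
Hypotheses (GT : is_group T opT ivT eT) (GU : is_group U opU ivU eU).
Variable f : T -> U.
Hypothesis f_hom : is_hom opT opU f.

Lemma hom_one : f eT = eU.
Proof.
  apply (mul_left_cancel GU (f eT)).
  rewrite <- f_hom, (grp_idl GT), (grp_idr GU). reflexivity.
Qed.

Lemma hom_inv x : f (ivT x) = ivU (f x).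
Proof.
  apply (inv_unique GU). rewrite <- f_hom, (grp_invr GT). exact hom_one.
Qed.

End Homomorphisms.

(* [f] need not come from a group homomorphism: [aut_mul] acts on pairs, which
   do not form a group, so preservation of all three operations is assumed. *)
Section VerbalMap.

Context {T U : Type} {opT : T -> T -> T} {ivT : T -> T} {eT : T}
  {opU : U -> U -> U} {ivU : U -> U} {eU : U}.
Variables (DT : T -> Prop) (DU : U -> Prop) (W : word -> Prop) (f : T -> U).
Hypotheses (f_mul : forall x y, f (opT x y) = opU (f x) (f y))
  (f_inv : forall x, f (ivT x) = ivU (f x)) (f_one : f eT = eU).

Lemma weval_map g w : f (weval opT ivT eT g w) = weval opU ivU eU (fun n => f (g n)) w.
Proof.
  induction w as [n | | u IHu v IHv | u IHu]; simpl.
  - reflexivity.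
  - exact f_one.
  - rewrite f_mul, IHu, IHv. reflexivity.
  - rewrite f_inv, IHu. reflexivity.
Qed.

Lemma in_verbal_map (f_dom : forall x, DT x -> DU (f x)) x :
  in_verbal opT ivT eT DT W x -> in_verbal opU ivU eU DU W (f x).
Proof.
  induction 1.
  - rewrite weval_map. apply iv_value; auto.
  - rewrite f_one. apply iv_one.
  - rewrite f_mul. apply iv_mul; assumption.
  - rewrite f_inv. apply iv_inv; assumption.
Qed.

End VerbalMap.

Section SkewBrace.

Variable A : skew_brace.

Local Notation "x ⊕ y" := (sb_add A x y) (at level 50, left associativity).
Local Notation "x ⊙ y" := (sb_mul A x y) (at level 40, left associativity).
Local Notation "⊖ x" := (sb_neg A x) (at level 35, right associativity).

Let GA := sb_add_group A.
Let GM := sb_mul_group A.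

Definition lambda (a x : A) : A := ⊖ a ⊕ a ⊙ x.

Lemma sb_one_zero : sb_one A = sb_zero A.
Proof.
  pose proof (sb_compat A (sb_one A) (sb_zero A) (sb_zero A)) as H.
  rewrite (grp_idl GA), !(grp_idl GM), (grp_idr GA), (grp_idl GA) in H.
  rewrite <- (invK GA (sb_one A)), <- H. apply (inv_one GA).
Qed.

Lemma mul_eq_add_lambda a x : a ⊙ x = a ⊕ lambda a x.
Proof.
  unfold lambda. rewrite (grp_assoc GA), (grp_invr GA), (grp_idl GA). reflexivity.
Qed.

Lemma lambda_hom a : is_hom (sb_add A) (sb_add A) (lambda a).
Proof.
  intros x y. unfold lambda. rewrite sb_compat, !(grp_assoc GA). reflexivity.
Qed.

Lemma lambda_mul a b x : lambda a (lambda b x) = lambda (a ⊙ b) x.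
Proof.
  unfold lambda at 2.
  rewrite (lambda_hom a), (hom_inv GA GA _ (lambda_hom a)).
  unfold lambda.
  rewrite (invM GA), (invK GA), (grp_assoc GM), !(grp_assoc GA).
  rewrite <- (grp_assoc GA _ a), (grp_invr GA), (grp_idr GA).
  reflexivity.
Qed.

Lemma lambda_one x : lambda (sb_one A) x = x.
Proof.
  unfold lambda. rewrite (grp_idl GM), sb_one_zero, (inv_one GA), (grp_idl GA).
  reflexivity.
Qed.

Lemma lambda_aut a : is_aut_pair (sb_add A) (lambda a, lambda (sb_inv A a)).
Proof.
  split; [apply lambda_hom | simpl; split; intro x; rewrite lambda_mul].
  - rewrite (grp_invl GM). apply lambda_one.
  - rewrite (grp_invr GM). apply lambda_one.
Qed.

End SkewBrace.

Section Quotient.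

Variables (A : skew_brace) (B : A -> Prop) (Q : group) (pi : A -> Q).
Hypotheses (HB : characteristic_add_subgroup A B) (Hpi : natural_quotient A B Q pi).

Let GA := sb_add_group A.
Let GM := sb_mul_group A.
Let GQ := g_axioms Q.
Let pi_hom : is_hom (sb_add A) (gmul Q) pi := proj1 Hpi.
Let pi_surj : forall q, exists x, pi x = q := proj1 (proj2 Hpi).
Let pi_ker : forall x, pi x = gone Q <-> B x := proj2 (proj2 Hpi).

Lemma pi_eq_ker x y : pi x = pi y <-> B (sb_add A (sb_neg A x) y).
Proof.
  rewrite <- pi_ker, pi_hom, (hom_inv GA GQ _ pi_hom).
  split; intro Hxy.
  - rewrite Hxy. apply (grp_invl GQ).
  - exact (eq_of_mul_inv_l GQ _ _ Hxy).
Qed.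

Lemma aut_pi_compat p x y :
  is_aut_pair (sb_add A) p -> pi x = pi y -> pi (fst p x) = pi (fst p y).
Proof.
  intros Hp Hxy. pose proof (proj1 Hp) as p_hom.
  apply pi_eq_ker in Hxy. apply pi_eq_ker.
  rewrite <- (hom_inv GA GA _ p_hom), <- p_hom.
  exact (proj2 HB p Hp _ Hxy).
Qed.

Definition lift (q : Q) : A :=
  proj1_sig (constructive_indefinite_description _ (pi_surj q)).

Lemma pi_lift q : pi (lift q) = q.
Proof. exact (proj2_sig (constructive_indefinite_description _ (pi_surj q))). Qed.

Definition induced (f : A -> A) (q : Q) : Q := pi (f (lift q)).

Lemma induced_pi p x :
  is_aut_pair (sb_add A) p -> induced (fst p) (pi x) = pi (fst p x).
Proof. intro Hp. apply (aut_pi_compat p _ _ Hp), pi_lift. Qed.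

Lemma induced_lambda_pi c x : induced (lambda A c) (pi x) = pi (lambda A c x).
Proof. exact (induced_pi _ x (lambda_aut A c)). Qed.

Definition lambda_quo (c : A) : (Q -> Q) * (Q -> Q) :=
  (induced (lambda A c), induced (lambda A (sb_inv A c))).

Lemma lambda_quo_aut c : is_aut_pair (gmul Q) (lambda_quo c).
Proof.
  split; [| split]; simpl.
  - intros q r.
    rewrite <- (pi_lift q), <- (pi_lift r), <- pi_hom, !induced_lambda_pi,
      (lambda_hom A c), pi_hom.
    reflexivity.
  - intro q.
    rewrite <- (pi_lift q), !induced_lambda_pi, lambda_mul, (grp_invl GM), lambda_one.
    reflexivity.
  - intro q.
    rewrite <- (pi_lift q), !induced_lambda_pi, lambda_mul, (grp_invr GM), lambda_one.
    reflexivity.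
Qed.

Lemma induced_lambda_mul c d :
  induced (lambda A (sb_mul A c d)) = fun q => induced (lambda A c) (induced (lambda A d) q).
Proof.
  apply functional_extensionality. intro q.
  rewrite <- (pi_lift q), !induced_lambda_pi, lambda_mul. reflexivity.
Qed.

Lemma lambda_quo_mul c d :
  lambda_quo (sb_mul A c d) = aut_mul (lambda_quo c) (lambda_quo d).
Proof.
  unfold lambda_quo, aut_mul; simpl.
  rewrite (invM GM), !induced_lambda_mul. reflexivity.
Qed.

Lemma lambda_quo_inv c : lambda_quo (sb_inv A c) = aut_inv (lambda_quo c).
Proof. unfold lambda_quo, aut_inv; simpl. rewrite (invK GM). reflexivity. Qed.

Lemma lambda_quo_one : lambda_quo (sb_one A) = aut_one.
Proof.
  assert (Hid : induced (lambda A (sb_one A)) = fun q => q).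
  { apply functional_extensionality. intro q.
    rewrite <- (pi_lift q), induced_lambda_pi, lambda_one. reflexivity. }
  unfold lambda_quo, aut_one. rewrite (inv_one GM), Hid. reflexivity.
Qed.

Lemma lambda_verbal_trivial W a x :
  verbal_aut_trivial Q W ->
  in_verbal (sb_mul A) (sb_inv A) (sb_one A) (fun _ => True) W a ->
  pi (lambda A a x) = pi x.
Proof.
  intros Htriv Ha.
  rewrite <- induced_lambda_pi.
  apply (Htriv (lambda_quo a)).
  apply (in_verbal_map (fun _ => True) (is_aut_pair (gmul Q)) W lambda_quo
           lambda_quo_mul lambda_quo_inv lambda_quo_one);
    [intros c _; apply lambda_quo_aut | exact Ha].
Qed.

End Quotient.

Theorem proposition3p1 (A : skew_brace) (B : A -> Prop)
  (HB : characteristic_add_subgroup A B) (W : word -> Prop)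
  (Q : group) (pi : A -> Q) (Hpi : natural_quotient A B Q pi) :
  verbal_aut_trivial Q W ->
  forall a b : A,
    in_verbal (@sb_mul A) (@sb_inv A) (@sb_one A) (fun _ => True) W a ->
    in_verbal (@sb_mul A) (@sb_inv A) (@sb_one A) (fun _ => True) W b ->
    pi (sb_mul A a b) = pi (sb_add A a b) /\ pi (sb_inv A a) = pi (sb_neg A a).
Proof.
  (* Only a ∈ W(A_⊙) is needed. *)
  intros Htriv a b Ha _.
  pose proof (proj1 Hpi) as pi_hom.
  pose proof (g_axioms Q) as GQ.
  assert (lambda_a_trivial : forall x, pi (lambda A a x) = pi x)
    by (intro x; exact (lambda_verbal_trivial A B Q pi HB Hpi W a x Htriv Ha)).
  split.
  - rewrite mul_eq_add_lambda, !pi_hom, lambda_a_trivial. reflexivity.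
  - assert (Hinv : gmul Q (pi a) (pi (sb_inv A a)) = gone Q).
    { rewrite <- (lambda_a_trivial (sb_inv A a)), <- pi_hom, <- mul_eq_add_lambda,
        (grp_invr (sb_mul_group A)), sb_one_zero.
      exact (hom_one (sb_add_group A) GQ pi pi_hom). }
    rewrite (hom_inv (sb_add_group A) GQ pi pi_hom).
    exact (inv_unique GQ _ _ Hinv).
Qed.
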